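(* Let $n\in\mathbb{Z}^+$ and let $P_n$ denote the $n$-th Pell number, defined by $P_0=0$, $P_1=1$ and $P_n=2P_{n-1}+P_{n-2}$ for $n>1$. Then $$P_n = \left((3^n+1)^{n-1}\bmod (9^n-2)\right)\bmod (3^n-1).$$
   Context: For integers, $u\bmod m$ denotes the least non-negative remainder of $u$ upon division by $m>0$. *)

From mathcomp Require Import all_boot.

Fixpoint pell (n : nat) : nat :=
  match n with
  | 0 => 0
  | 1 => 1
  | S ((S m) as k) => 2 * pell k + pell m
  end.

From mathcomp Require Import all_boot.
From mathcomp Require Import zify.

(* Modulo x^2 - 2 the integer x plays the role of sqrt 2, and
   (1 + sqrt 2)^k = (P_(k+1) - P_k) + P_k sqrt 2, so
   (x + 1)^k = P_(k+1) + P_k (x - 1) modulo x^2 - 2.  For x = 3^n and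
   k = n - 1 this representative is already reduced, because Pell numbers grow
   more slowly than powers of 3, and reducing it modulo x - 1 leaves P_n. *)

Lemma pellSS k : pell k.+2 = 2 * pell k.+1 + pell k.
Proof. by []. Qed.

Lemma pell_leqSn k : pell k <= pell k.+1.
Proof. by case: k => // k; rewrite pellSS; lia. Qed.

Lemma pellS_leq_exp3 k : pell k.+1 <= 3 ^ k.
Proof.
elim: k => // k IHk.
by rewrite pellSS expnS; have := pell_leqSn k; lia.
Qed.

Lemma pell_expn_mod x k : 1 < x ->
  (x + 1) ^ k = pell k.+1 + pell k * (x - 1) %[mod x ^ 2 - 2].
Proof.
move=> x_gt1; elim: k => [|k IHk]; first by rewrite mul0n.
have step : (x + 1) * (pell k.+1 + pell k * (x - 1))
            = pell k.+2 + pell k.+1 * (x - 1) + pell k * (x ^ 2 - 2).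
  by rewrite pellSS; nia.
by rewrite expnS -modnMmr IHk modnMmr step [_ + pell k * _]addnC modnMDl.
Qed.
Lemma pell_residue_lt m : pell m.+1 + pell m * (3 ^ m.+1 - 1) < (3 ^ m.+1) ^ 2 - 2.
Proof.
set x := 3 ^ m.+1; set y := 3 ^ m.
have x_def : x = 3 * y by rewrite /x expnS.
have y_gt0 : 0 < y by rewrite expn_gt0.
have pell_le : pell m * (x - 1) <= y * (x - 1).
  by rewrite leq_mul2r (leq_trans (pell_leqSn m) (pellS_leq_exp3 m)) orbT.
have yx_eq : y + y * (x - 1) = y * x.
  by rewrite mulnBr muln1 subnKC // leq_pmulr // x_def muln_gt0.
have x2_eq : x ^ 2 = 3 * (y * x) by rewrite expnS expn1 {1}x_def -mulnA.
have yx_ge3 : 3 <= y * x by rewrite x_def mulnCA leq_pmulr // muln_gt0 y_gt0.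
by rewrite x2_eq; have := pellS_leq_exp3 m; lia.
Qed.

Theorem theorem4p1 (n : nat) (hn : 0 < n) :
  pell n = ((3 ^ n + 1) ^ (n - 1) %% (9 ^ n - 2)) %% (3 ^ n - 1).
Proof.
case: n hn => // m _; rewrite subSS subn0.
have x_gt1 : 1 < 3 ^ m.+1 by rewrite (ltn_exp2l 0).
have -> : 9 ^ m.+1 = (3 ^ m.+1) ^ 2 by rewrite -expnM mulnC expnM.
rewrite pell_expn_mod // (modn_small (pell_residue_lt m)).
rewrite addnC modnMDl modn_small // expnS.
have := expn_gt0 3 m; have := pellS_leq_exp3 m; lia.
Qed.
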